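(* Let $H = (V,E)$ be a hypertree such that for each edge $e \in E$, with $m = |e|$, there is a choice of subset $S(\pi) \subseteq [m-1]$ for each bijection $\pi: e \to [m]$ such that the set of nonconstant colorings $\chi: e \to \mathbb{P}$ is the disjoint union $$\biguplus_{\pi} A(\pi, S(\pi))$$ over all bijections $\pi: e \to [m]$. Then $X_H$ is $F$-positive.
   Context: $\mathbb{P}=\{1,2,\ldots\}$. For a finite set $e$ with $|e|=m$, a bijection $\pi: e \to [m]$ and $S \subseteq [m-1]$, $A(\pi,S)$ is the set of maps $\chi: e \to \mathbb{P}$ with $\chi(\pi^{-1}(1)) \le \cdots \le \chi(\pi^{-1}(m))$ and $\chi(\pi^{-1}(i)) < \chi(\pi^{-1}(i+1))$ for $i \in S$. A hypergraph is a pair $H=(V,E)$ with $V$ finite and $E$ a family of subsets of $V$ with $|e|>1$. A path is a sequence $v_1, e_1, v_2, \ldots, e_m, v_{m+1}$ with $e_i \in E$, $v_i, v_{i+1} \in e_i$, edges distinct and vertices distinct except that $v_1 = v_{m+1}$ is allowed; if $v_1 = v_{m+1}$ and $m>1$ it is a cycle. A hypertree is a connected hypergraph with no cycles. A coloring of $V$ is proper if it is nonconstant on every edge; $X_H = \sum_\chi \prod_{v\in V} x_{\chi(v)}$ over proper colorings. With $n=|V|$, $F_S = \sum x_{i_1}\cdots x_{i_n}$ over $i_1 \le \cdots \le i_n$ in $\mathbb{P}$ with $i_j < i_{j+1}$ for $j \in S$; $X_H$ is $F$-positive if all coefficients of its expansion in the $F_S$, $S \subseteq [n-1]$, are nonnegative.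 *)

From mathcomp Require Import all_boot all_order all_algebra.
Set Implicit Arguments. Unset Strict Implicit. Unset Printing Implicit Defensive.
Import Order.TTheory GRing.Theory Num.Theory.

Definition hypergraph (V : finType) (E : {set {set V}}) : Prop :=
  forall e, e \in E -> 1 < #|e|.

Definition hadj (V : finType) (E : {set {set V}}) : rel V :=
  fun u v => [exists e in E, (u \in e) && (v \in e)].

Definition hconnected (V : finType) (E : {set {set V}}) : Prop :=
  forall u v : V, connect (hadj E) u v.

(* A cycle v_1, e_1, v_2, ..., e_m, v_{m+1} = v_1 with m > 1, distinct edges,
   distinct vertices v_1..v_m; encoded by the sequences vs = [v_1..v_m] and
   es = [e_1..e_m], indices taken 0-based and cyclically. *)
Definition hcycle (V : finType) (E : {set {set V}})
    (vs : seq V) (es : seq {set V}) : Prop :=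
  let m := size vs in
  1 < m /\ size es = m /\ uniq vs /\ uniq es /\
  all (fun e => e \in E) es /\
  (forall i (x : V), i < m ->
     (nth x vs i \in nth set0 es i) && (nth x vs ((i.+1) %% m) \in nth set0 es i)).

Definition hypertree (V : finType) (E : {set {set V}}) : Prop :=
  [/\ hypergraph E, hconnected E & forall vs es, ~ hcycle E vs es].

(* A bijection pi : e -> [m] is encoded by the sequence
   [pi^-1(1); ...; pi^-1(m)] : a duplicate-free enumeration of e. *)
Definition edge_bij (V : finType) (e : {set V}) (s : seq V) : bool :=
  uniq s && [forall v, (v \in s) == (v \in e)].

(* membership of i+1 in S, for S a subset of [m-1] represented as {set 'I_m.-1}
   (element x of 'I_m.-1 stands for x+1 in [m-1]). *)
Definition inS (k : nat) (S : {set 'I_k}) (j : nat) : bool :=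
  [exists x in S, val x == j].

Definition inA (V : finType) (s : seq V) (k : nat) (S : {set 'I_k})
    (chi : V -> nat) : Prop :=
  let cs := map chi s in
  forall j, j.+1 < size s ->
    nth 0 cs j <= nth 0 cs j.+1 /\ (inS S j -> nth 0 cs j < nth 0 cs j.+1).

Definition nonconstant_on (V : finType) (e : {set V}) (chi : V -> nat) : Prop :=
  exists u v, [/\ u \in e, v \in e & chi u <> chi v].

(* The hypothesis of Theorem 5.1 for a single edge e with S as choice function:
   nonconstant colorings e -> P are the disjoint union of the A(pi, S(pi)). *)
Definition edge_decomp (V : finType) (e : {set V})
    (S : seq V -> {set 'I_(#|e|).-1}) : Prop :=
  (forall chi : V -> nat, (forall v, v \in e -> 0 < chi v) ->
     (nonconstant_on e chi <-> exists s, edge_bij e s /\ inA s (S s) chi)) /\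
  (forall (chi : V -> nat) s1 s2, (forall v, v \in e -> 0 < chi v) ->
     edge_bij e s1 -> edge_bij e s2 ->
     inA s1 (S s1) chi -> inA s2 (S s2) chi -> s1 = s2).

(* Colorings truncated to N colors: value i : 'I_N stands for color i+1. *)
Definition proper (V : finType) (E : {set {set V}}) N (chi : {ffun V -> 'I_N}) : bool :=
  [forall e in E, [exists u in e, exists v in e, chi u != chi v]].

(* coefficient of x^alpha (alpha i = exponent of x_{i+1}) in X_H(x_1..x_N,0,0,...) *)
Definition XH_coef (V : finType) (E : {set {set V}}) N (alpha : {ffun 'I_N -> nat}) : nat :=
  #|[set chi : {ffun V -> 'I_N} | proper E chi &&
      [forall i, #|[set v | chi v == i]| == alpha i]]|.

Definition Fseq n N (S : {set 'I_n.-1}) (w : {ffun 'I_n -> 'I_N}) : bool :=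
  [forall j : 'I_n, forall k : 'I_n, (val k == (val j).+1) ==>
     ((w j <= w k) && (inS S (val j) ==> (w j < w k)))].

(* coefficient of x^alpha in F_S(x_1..x_N,0,0,...) *)
Definition F_coef n N (S : {set 'I_n.-1}) (alpha : {ffun 'I_N -> nat}) : nat :=
  #|[set w : {ffun 'I_n -> 'I_N} | Fseq S w &&
      [forall i, #|[set j | w j == i]| == alpha i]]|.

(* X_H is F-positive: X_H = sum_S c_S F_S with all c_S >= 0, equality of power
   series checked coefficientwise on every truncation to finitely many variables. *)
Definition F_positive (V : finType) (E : {set {set V}}) : Prop :=
  exists c : {set 'I_(#|V|).-1} -> int,
    (forall S, 0 <= c S)%R /\
    forall N (alpha : {ffun 'I_N -> nat}),
      ((XH_coef E alpha)%:Z = \sum_(S : {set 'I_(#|V|).-1}) c S * (F_coef S alpha)%:Z)%R.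

(* Fix, for every edge e, a decomposition of the nonconstant colourings of e
   as in the hypothesis.  A proper colouring f then selects on each edge the
   unique order s with f in A(s, S(s)), that is, weak inequalities f u <= f v
   and strict ones f u < f v between consecutive vertices of s.  Conversely,
   by uniqueness of the decomposition, every positive colouring satisfying
   these inequalities is proper and selects the same orders.  So the proper
   colourings split into classes, each the set of P-partitions of one system
   of inequalities.  Such a system is acyclic: since the hypertree has no
   cycles, a cycle of inequalities would stay inside a single edge, where the
   inequalities only orient a path.  Stanley's fundamental lemma then expands
   each class in the F_S, indexed by descent sets of linear extensions. *)

From Pilot Require Import Defs.
From mathcomp Require Import all_boot all_order all_algebra.
From mathcomp Require Import zify.
From Stdlib Require Import ClassicalEpsilon.
Set Implicit Arguments. Unset Strict Implicit. Unset Printing Implicit Defensive.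

Section LexOrder.
Variables (V : finType) (rk f : V -> nat).

Definition lex_lt (u v : V) : bool := (f u < f v) || ((f u == f v) && (rk u < rk v)).

Lemma lex_lt_trans u v x : lex_lt u v -> lex_lt v x -> lex_lt u x.
Proof. rewrite /lex_lt; lia. Qed.

Lemma lex_ltxx u : lex_lt u u = false.
Proof. rewrite /lex_lt; lia. Qed.

Lemma lex_lt_asym u v : lex_lt u v -> lex_lt v u = false.
Proof. rewrite /lex_lt; lia. Qed.

Lemma lex_lt_leq u v : lex_lt u v -> f u <= f v.
Proof. rewrite /lex_lt; lia. Qed.

Lemma lex_lt_ltn u v : lex_lt u v -> rk v < rk u -> f u < f v.
Proof. rewrite /lex_lt; lia. Qed.

Lemma lex_lt_of_leq u v : f u <= f v -> rk u < rk v -> lex_lt u v.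
Proof. rewrite /lex_lt; lia. Qed.

Lemma lex_lt_of_ltn u v : f u < f v -> lex_lt u v.
Proof. rewrite /lex_lt; lia. Qed.

Lemma lex_lt_total u v : injective rk -> u != v -> lex_lt u v || lex_lt v u.
Proof.
move=> rk_inj neq_uv; have : rk u != rk v by apply: contra neq_uv => /eqP/rk_inj->.
rewrite /lex_lt; lia.
Qed.

Definition lex_rank (v : V) : nat := #|[set u | lex_lt u v]|.

Lemma lex_rank_mono u v : lex_lt u v -> lex_rank u < lex_rank v.
Proof.
move=> lt_uv; apply: proper_card; apply/properP; split.
  by apply/subsetP => x; rewrite !inE => /lex_lt_trans; apply.
by exists u; rewrite !inE ?lt_uv // lex_ltxx.
Qed.

Lemma lex_rank_lt_card v : lex_rank v < #|V|.
Proof.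
rewrite /lex_rank -cardsT; apply: proper_card; apply/properP.
by split; [exact: subsetT | exists v; rewrite !inE ?lex_ltxx].
Qed.

Lemma lex_rank_inj : injective rk -> injective lex_rank.
Proof.
move=> rk_inj u v eq_uv; apply/eqP; apply: contraT => /(lex_lt_total rk_inj).
by case/orP => /lex_rank_mono; rewrite eq_uv ltnn.
Qed.

End LexOrder.

Lemma card_ord_ltn n k : k <= n -> #|[set i : 'I_n | i < k]| = k.
Proof.
move=> le_kn; have widen_inj : injective (widen_ord le_kn) by move=> i j /(congr1 val) /= /val_inj.
rewrite -[RHS]card_ord -(card_imset _ widen_inj); apply: eq_card => i; rewrite inE.
apply/idP/imsetP => [lt_ik|[j _ ->]]; last by rewrite /= ltn_ord.
by exists (Ordinal lt_ik) => //; apply: val_inj.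
Qed.

Definition has_content (A : finType) N (f : {ffun A -> 'I_N}) (alpha : {ffun 'I_N -> nat}) : bool :=
  [forall i, #|[set x | f x == i]| == alpha i].

Definition respects (V : finType) (W T : {set V * V}) (f : V -> nat) : bool :=
  [forall p in W, f p.1 <= f p.2] && [forall p in T, f p.1 < f p.2].

Section Standardization.
Variables (V : finType) (rk : V -> nat).
Hypothesis rk_inj : injective rk.
Local Notation n := #|V|.

Definition descents (pi : {ffun V -> 'I_n}) : {set 'I_n.-1} :=
  [set j : 'I_n.-1 | [exists u, exists v,
     [&& val (pi u) == j, val (pi v) == j.+1 & rk v < rk u]]].

Definition relabel N (pi : {ffun V -> 'I_n}) (w : {ffun 'I_n -> 'I_N}) : {ffun V -> 'I_N} :=
  [ffun v => w (pi v)].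

Lemma bij_ord_card (pi : V -> 'I_n) : injective pi -> bijective pi.
Proof. by move=> pi_inj; apply: inj_card_bij pi_inj _; rewrite card_ord. Qed.

Lemma has_content_relabel N (pi : {ffun V -> 'I_n}) (w : {ffun 'I_n -> 'I_N}) alpha :
  injective pi -> has_content (relabel pi w) alpha = has_content w alpha.
Proof.
move=> /bij_ord_card [g piK gK]; apply: eq_forallb => i; congr (_ == _).
rewrite -(card_image (can_inj gK) [set j | w j == i]); apply: eq_card => v; rewrite inE.
apply/idP/imageP => [wvi|[j ji ->]]; last by rewrite ffunE gK; rewrite inE in ji.
by exists (pi v); rewrite ?piK // inE; rewrite ffunE in wvi.
Qed.

Section Relabel.
Variables (N : nat) (pi : {ffun V -> 'I_n}) (w : {ffun 'I_n -> 'I_N}).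
Hypotheses (pi_inj : injective pi) (w_Fseq : Fseq (descents pi) w).
Local Notation colour := (val \o relabel pi w).

Lemma relabel_lex_lt_succ u v : pi v = (pi u).+1 :> nat -> lex_lt rk colour u v.
Proof.
move=> pi_uv; have /forallP/(_ (pi u))/forallP/(_ (pi v))/implyP := w_Fseq.
move=> /(_ (introT eqP pi_uv))/andP[le_w lt_w].
have neq_rk : rk u != rk v by apply/eqP => /rk_inj eq_uv; move: pi_uv; rewrite eq_uv; lia.
rewrite /lex_lt /= !ffunE; case: (ltngtP (rk u) (rk v)) neq_rk => // lt_rk _.
  by move: le_w; lia.
suff /(implyP lt_w) : inS (descents pi) (pi u) by lia.
have lt_u : pi u < n.-1 by have := ltn_ord (pi v); lia.
apply/existsP; exists (Ordinal lt_u); rewrite /= eqxx andbT inE.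
by apply/existsP; exists u; apply/existsP; exists v; rewrite /= eqxx pi_uv eqxx lt_rk.
Qed.

Lemma relabel_lex_lt u v : pi u < pi v -> lex_lt rk colour u v.
Proof.
have [g piK gK] := bij_ord_card pi_inj.
pose h i := g (insubd (pi u) i).
have hK x : h (pi x) = x by rewrite /h valKd piK.
suff homo_h : {in [pred i | i < n] &, {homo h : i j / i < j >-> lex_lt rk colour i j}}.
  by move=> lt_uv; have := homo_h _ _ (ltn_ord (pi u)) (ltn_ord (pi v)) lt_uv; rewrite !hK.
apply: (@homo_ltn_in _ [pred i | i < n]) => [||k]; rewrite ?inE.
- by move=> y x z; apply: lex_lt_trans.
- by move=> a b _; rewrite inE => lt_b c; rewrite inE; lia.
move=> lt_k lt_Sk; apply: relabel_lex_lt_succ.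
by rewrite /h !gK !insubdK.
Qed.

Lemma relabel_lex_ltE u v : lex_lt rk colour u v = (pi u < pi v).
Proof.
apply/idP/idP => [lt_uv|]; last exact: relabel_lex_lt.
rewrite ltnNge leq_eqVlt; apply/negP => /orP[/eqP/val_inj/pi_inj eq_vu|].
  by move: lt_uv; rewrite eq_vu lex_ltxx.
by move/relabel_lex_lt/lex_lt_asym; rewrite lt_uv.
Qed.

Lemma lex_rank_relabel v : lex_rank rk colour v = pi v.
Proof.
have [g piK gK] := bij_ord_card pi_inj.
transitivity #|[set u | pi u < pi v]|.
  by apply: eq_card => u; rewrite !inE relabel_lex_ltE.
rewrite -(card_image pi_inj) -[RHS](card_ord_ltn (ltnW (ltn_ord (pi v)))).
apply: eq_card => i; rewrite inE; apply/imageP/idP => [[u]|lt_i]; first by rewrite inE => ? ->.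
by exists (g i); rewrite ?inE gK.
Qed.

End Relabel.

Definition standardize N (chi : {ffun V -> 'I_N}) : {ffun V -> 'I_n} :=
  [ffun v => Ordinal (lex_rank_lt_card rk (val \o chi) v)].

Section Standardize.
Variables (N : nat) (chi : {ffun V -> 'I_N}).

Lemma standardize_mono u v :
  lex_lt rk (val \o chi) u v -> standardize chi u < standardize chi v.
Proof. by rewrite !ffunE; apply: lex_rank_mono. Qed.

Lemma standardize_inj : injective (standardize chi).
Proof. by move=> u v /(congr1 val); rewrite !ffunE; apply: lex_rank_inj. Qed.

Lemma relabel_standardize :
  exists2 w, Fseq (descents (standardize chi)) w & relabel (standardize chi) w = chi.
Proof.
have [g piK gK] := bij_ord_card standardize_inj.
exists [ffun i => chi (g i)]; last by apply/ffunP => v; rewrite /relabel [LHS]ffunE [LHS]ffunE piK.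
apply/forallP => j; apply/forallP => k; apply/implyP => /eqP /= succ_jk; rewrite !ffunE.
have lt_jk : lex_lt rk (val \o chi) (g j) (g k).
  have /(@lex_lt_total _ rk (val \o chi) _ _ rk_inj)/orP[] // : g j != g k.
    by apply/eqP => /(can_inj gK) eq_jk; move: succ_jk; rewrite eq_jk; lia.
  by move/standardize_mono; rewrite !gK succ_jk ltnNge leqnSn.
apply/andP; split; first exact: lex_lt_leq lt_jk.
apply/implyP => /existsP[x /andP[]]; rewrite inE => /existsP[u /existsP[v]].
case/and3P => /eqP pi_u /eqP pi_v lt_rk /eqP x_j.
have g_j : g j = u by apply: (can_inj piK); rewrite gK; apply: val_inj; rewrite /= pi_u x_j.
have g_k : g k = v by apply: (can_inj piK); rewrite gK; apply: val_inj; rewrite /= pi_v x_j succ_jk.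
by apply: lex_lt_ltn lt_jk _; rewrite g_j g_k.
Qed.

End Standardize.

Definition linear_extension (W T : {set V * V}) (pi : {ffun V -> 'I_n}) : bool :=
  [forall p in W :|: T, pi p.1 < pi p.2].

Definition compatible_pairs (W T : {set V * V}) N (alpha : {ffun 'I_N -> nat}) :=
  [set x : {ffun V -> 'I_n} * {ffun 'I_n -> 'I_N} |
     [&& injectiveb x.1, linear_extension W T x.1,
         Fseq (descents x.1) x.2 & has_content x.2 alpha]].

Definition linear_extensions_des (W T : {set V * V}) (S : {set 'I_n.-1}) : {set {ffun V -> 'I_n}} :=
  [set pi : {ffun V -> 'I_n} | [&& injectiveb pi, linear_extension W T pi & descents pi == S]].

Lemma card_compatible_pairs (W T : {set V * V}) N (alpha : {ffun 'I_N -> nat}) :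
  #|compatible_pairs W T alpha| =
  \sum_(S : {set 'I_n.-1}) #|linear_extensions_des W T S| * F_coef S alpha.
Proof.
rewrite -sum1_card; under eq_bigl => x do rewrite inE andbA.
rewrite -(pair_big_dep (fun pi : {ffun V -> 'I_n} => injectiveb pi && linear_extension W T pi)
            (fun pi w => Fseq (descents pi) w && has_content w alpha) (fun _ _ => 1)) /=.
rewrite (partition_big descents predT) //=; apply: eq_bigr => S _.
rewrite -sum_nat_const; apply: eq_big => [pi|pi /andP[_ /eqP <-]]; first by rewrite inE andbA.
by rewrite sum1_card; apply: eq_card => w; rewrite inE.
Qed.

Section PPartitions.
Variables (W T : {set V * V}) (N : nat) (alpha : {ffun 'I_N -> nat}).
Hypotheses (rk_W : forall p, p \in W -> rk p.1 < rk p.2)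
           (rk_T : forall p, p \in T -> rk p.2 < rk p.1).

Lemma relabel_respects pi w : (pi, w) \in compatible_pairs W T alpha ->
  respects W T (val \o relabel pi w).
Proof.
rewrite inE => /and4P[/injectiveP pi_inj /forallP lin w_Fseq _].
have lt_pi p : p \in W :|: T -> lex_lt rk (val \o relabel pi w) p.1 p.2.
  by move=> pWT; apply: relabel_lex_lt => //; apply: (implyP (lin p)).
apply/andP; split; apply/forallP => p; apply/implyP => pWT.
  by apply: lex_lt_leq (lt_pi _ _); rewrite inE pWT.
by apply: lex_lt_ltn (lt_pi _ _) (rk_T pWT); rewrite inE pWT orbT.
Qed.

Lemma relabel_inj : {in compatible_pairs W T alpha &, injective (fun x => relabel x.1 x.2)}.
Proof.
move=> [pi1 w1] [pi2 w2]; rewrite !inE /=.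
case/and4P => /injectiveP inj1 _ Fseq1 _ /and4P[/injectiveP inj2 _ Fseq2 _] eq_relabel.
have eq_pi : pi1 = pi2.
  apply/ffunP => v; apply: val_inj => /=.
  by rewrite -(lex_rank_relabel inj1 Fseq1) -(lex_rank_relabel inj2 Fseq2) eq_relabel.
subst pi2; congr pair; apply/ffunP => i.
have [g piK gK] := bij_ord_card inj1.
by have := congr1 (fun chi : {ffun V -> 'I_N} => chi (g i)) eq_relabel; rewrite !ffunE gK.
Qed.

Lemma card_respects_compatible_pairs :
  #|[set chi : {ffun V -> 'I_N} | respects W T (val \o chi) && has_content chi alpha]| =
  #|compatible_pairs W T alpha|.
Proof.
rewrite -(card_in_imset relabel_inj); apply: eq_card => chi; rewrite inE.
apply/andP/imsetP => [[resp cont]|[[pi w] piw ->]]; last first.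
  split; first exact: relabel_respects.
  by move: piw; rewrite inE => /and4P[/injectiveP pi_inj _ _]; rewrite has_content_relabel.
have [w w_Fseq eq_chi] := relabel_standardize chi.
exists (standardize chi, w) => //; rewrite inE /= w_Fseq.
rewrite -(has_content_relabel _ _ (standardize_inj (chi := chi))) eq_chi cont !andbT.
apply/andP; split; first exact/injectiveP/standardize_inj.
case/andP: resp => /forallP resp_W /forallP resp_T.
apply/forallP => p; apply/implyP; rewrite inE => /orP[] pWT; apply: standardize_mono.
  exact: lex_lt_of_leq (implyP (resp_W p) pWT) (rk_W pWT).
exact: lex_lt_of_ltn (implyP (resp_T p) pWT).
Qed.

Lemma card_respects_sum_F_coef :
  #|[set chi : {ffun V -> 'I_N} | respects W T (val \o chi) && has_content chi alpha]| =
  \sum_(S : {set 'I_n.-1}) #|linear_extensions_des W T S| * F_coef S alpha.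
Proof. by rewrite card_respects_compatible_pairs card_compatible_pairs. Qed.

End PPartitions.

End Standardization.

Lemma oriented_path_acyclic (T : eqType) (s c : seq T) (A : rel T) :
  (forall u v, A u v ->
     [/\ u \in s, v \in s & (index v s == (index u s).+1) || (index u s == (index v s).+1)]) ->
  (forall u v, A u v -> ~~ A v u) -> ~~ nilp c -> ~~ cycle A c.
Proof.
(* At the vertex v of c that comes last in s, both cycle neighbours of v must
   be the vertex just before v in s. *)
move=> adj anti; case: c => // x0 c' _; set c := x0 :: c'; apply/negP => cycA.
pose P i := has (fun y => index y s == i) c.
have P_x0 : P (index x0 s) by apply/hasP; exists x0; rewrite ?mem_head.
have P_le i : P i -> i <= size s by case/hasP => y _ /eqP <-; apply: index_size.
case: (ex_maxnP (ex_intro P _ P_x0) P_le) => m /hasP[v v_c /eqP idx_v] max_m.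
have below y : y \in c -> A v y || A y v -> index v s = (index y s).+1.
  move=> y_c A_vy; have le_y : index y s <= m by apply: max_m; apply/hasP; exists y.
  by case/orP: A_vy => /adj[_ _]; lia.
have A_next := next_cycle cycA v_c; have A_prev := prev_cycle cycA v_c.
have eq_next_prev : next c v = prev c v.
  have [[_ next_s _] [prev_s _ _]] := (adj _ _ A_next, adj _ _ A_prev).
  apply: (index_inj v next_s prev_s).
  have := below _ _ (introT orP (or_introl A_next)).
  have := below _ _ (introT orP (or_intror A_prev)).
  by rewrite mem_next mem_prev v_c; lia.
by move: (anti _ _ A_next); rewrite eq_next_prev A_prev.
Qed.

Section ClosedWalks.
Variables (V : finType) (E : {set {set V}}).

Definition closed_walk (vs : seq V) (es : seq {set V}) : Prop :=
  [/\ size es = size vs, uniq vs, {subset es <= E} &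
      [/\ forall i x, i < size vs -> nth x vs i \in nth set0 es i,
          forall i x, i.+1 < size vs -> nth x vs i.+1 \in nth set0 es i &
          forall x, head x vs \in last set0 es]].

Lemma closed_walk_hcycle vs es :
  closed_walk vs es -> uniq es -> 1 < size vs -> hcycle E vs es.
Proof.
case=> size_es uniq_vs sub_E [in_es in_es_succ head_last] uniq_es lt1.
do 5!split=> //; first exact/allP.
move=> i x lt_i; rewrite in_es //=.
case: (ltnP i.+1 (size vs)) => [lt_Si|]; first by rewrite modn_small // in_es_succ.
move=> le_Si; have -> : i.+1 = size vs by lia.
by rewrite modnn nth0 (_ : i = (size es).-1) ?nth_last //; lia.
Qed.

Section SplitClosedWalk.
Variables (vs : seq V) (es : seq {set V}) (i j : nat).
Hypotheses (walk : closed_walk vs es) (lt_ij : i < j) (lt_j : j < size vs)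
           (eq_es : nth set0 es i = nth set0 es j).
Local Notation inner s := (take (j - i) (drop i.+1 s)).
Local Notation outer s := (take i.+1 s ++ drop j.+1 s).

Lemma closed_walk_inner :
  closed_walk (inner vs) (inner es).
Proof.
case: walk => size_es uniq_vs sub_E [in_es in_es_succ _].
have size_vs1 : size (inner vs) = j - i by rewrite size_takel // size_drop; lia.
have size_es1 : size (inner es) = j - i by rewrite size_takel // size_drop; lia.
have nth_vs1 k x : k < j - i -> nth x (inner vs) k = nth x vs (i.+1 + k).
  by move=> lt_k; rewrite nth_take // nth_drop.
have nth_es1 k : k < j - i -> nth set0 (inner es) k = nth set0 es (i.+1 + k).
  by move=> lt_k; rewrite nth_take // nth_drop.
split; rewrite ?size_vs1 ?size_es1 //.
- exact/take_uniq/drop_uniq.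
- by move=> e /mem_take/mem_drop/sub_E.
split.
- by move=> k x lt_k; rewrite nth_vs1 // nth_es1 //; apply: in_es; lia.
- by move=> k x lt_k; rewrite nth_vs1 // nth_es1 1?ltnW // addnS; apply: in_es_succ; lia.
move=> x; rewrite -nth0 nth_vs1; last by lia.
rewrite -nth_last size_es1 nth_es1; last by lia.
rewrite addn0 (_ : i.+1 + (j - i).-1 = j) -?eq_es; [apply: in_es_succ | ..]; lia.
Qed.

Lemma closed_walk_outer :
  closed_walk (outer vs) (outer es).
Proof.
case: walk => size_es uniq_vs sub_E [in_es in_es_succ head_last].
have size_vs2 : size (outer vs) = i.+1 + (size vs - j.+1).
  by rewrite size_cat size_takel ?size_drop //; lia.
have size_es2 : size (outer es) = i.+1 + (size vs - j.+1).
  by rewrite size_cat size_takel ?size_drop size_es //; lia.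
have nth_vs2 k x :
    nth x (outer vs) k = nth x vs (if k < i.+1 then k else j.+1 + (k - i.+1)).
  by rewrite nth_cat size_takel; [case: ifP => lt_k; rewrite ?nth_take ?nth_drop | lia].
have nth_es2 k :
    nth set0 (outer es) k = nth set0 es (if k < i.+1 then k else j.+1 + (k - i.+1)).
  by rewrite nth_cat size_takel; [case: ifP => lt_k; rewrite ?nth_take ?nth_drop | lia].
split; rewrite ?size_vs2 ?size_es2 //.
- apply: subseq_uniq uniq_vs; rewrite -[X in subseq _ X](cat_take_drop i.+1 vs).
  apply: cat_subseq (subseq_refl _) _.
  by rewrite (_ : j.+1 = (j - i) + i.+1) -?drop_drop ?drop_subseq //; lia.
- by move=> e; rewrite mem_cat => /orP[/mem_take|/mem_drop]; apply: sub_E.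
split.
- by move=> k x lt_k; rewrite nth_vs2 nth_es2; case: ltnP => ?; apply: in_es; lia.
- move=> k x; rewrite nth_vs2 nth_es2.
  case: (ltngtP k i) => [lt_ki|lt_ik|->] lt_k.
  + by rewrite !ltnS lt_ki (ltnW lt_ki); apply: in_es_succ; lia.
  + rewrite !ltnS ltnNge (ltnW lt_ik) leqNgt lt_ik /=.
    by rewrite (_ : j.+1 + (k.+1 - i.+1) = (j.+1 + (k - i.+1)).+1); [apply: in_es_succ | ..]; lia.
  + by rewrite ltnSn ltnn subnn addn0 eq_es; apply: in_es_succ; lia.
move=> x; have -> : head x (outer vs) = head x vs by case: (vs) lt_j.
suff -> : last set0 (outer es) = last set0 es by apply: head_last.
rewrite -!nth_last size_es2 size_es nth_es2; case: ltnP => le_i.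
  by rewrite (_ : _.-1 = i) ?eq_es; [congr nth | ..]; lia.
by congr nth; lia.
Qed.

End SplitClosedWalk.

Lemma closed_walk_single_edge vs es e : (forall vs es, ~ hcycle E vs es) ->
  closed_walk vs es -> e \in es -> all (pred1 e) es.
Proof.
move=> acyclic; elim: {vs}(size vs).+1 {-2}vs (ltnSn (size vs)) es e => // m IH vs lt_vs es e.
move=> walk e_es; have size_es : size es = size vs by case: walk.
(* A repeated edge splits the walk into two shorter closed walks through it. *)
have [uniq_es|/(uniqPn set0)[i [j [lt_ij lt_j eq_es]]]] := boolP (uniq es).
  apply/allP => d d_es; rewrite inE; apply: contraT => neq_de; case: (acyclic vs es).
  apply: closed_walk_hcycle walk uniq_es _; rewrite -size_es.
  apply: leq_trans (uniq_leq_size (s1 := [:: d; e]) _ _) => //=; first by rewrite inE neq_de.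
  by apply/allP; rewrite /= d_es e_es.
rewrite size_es in lt_j; move def_d : (nth set0 es i) => d.
have d_es1 : d \in take (j - i) (drop i.+1 es).
  have -> : d = nth set0 (take (j - i) (drop i.+1 es)) (j - i).-1.
    by rewrite -def_d eq_es nth_take ?nth_drop; [congr nth | ..]; lia.
  by apply: mem_nth; rewrite size_takel ?size_drop ?size_es; lia.
have d_es2 : d \in take i.+1 es ++ drop j.+1 es.
  by rewrite mem_cat -def_d -(nth_take set0 (ltnSn i)) mem_nth // size_takel // size_es; lia.
have size1 : size (take (j - i) (drop i.+1 vs)) < m by rewrite size_takel ?size_drop; lia.
have size2 : size (take i.+1 vs ++ drop j.+1 vs) < m.
  by rewrite size_cat !size_takel ?size_drop; lia.
have /allP all1 := IH _ size1 _ _ (closed_walk_inner walk lt_ij lt_j eq_es) d_es1.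
have /allP all2 := IH _ size2 _ _ (closed_walk_outer walk lt_ij lt_j eq_es) d_es2.
suff /allP all_d : all (pred1 d) es by have /eqP-> := all_d e e_es; apply/allP.
apply/allP => a; rewrite -{1}(cat_take_drop i.+1 es) -{1}(cat_take_drop (j - i) (drop i.+1 es)).
rewrite drop_drop (_ : j - i + i.+1 = j.+1); last by lia.
by rewrite !mem_cat orbCA -mem_cat => /orP[/all1|/all2].
Qed.

End ClosedWalks.

Definition consecutive (V : eqType) (s : seq V) k (S : {set 'I_k}) (b : bool) (u v : V) : bool :=
  [exists j : 'I_(size s), [&& j.+1 < size s, nth u s j == u, nth u s j.+1 == v & inS S j == b]].

Section Consecutive.
Variables (V : finType) (s : seq V) (k : nat) (S : {set 'I_k}).

Lemma consecutive_nth x j : j.+1 < size s -> consecutive s S (inS S j) (nth x s j) (nth x s j.+1).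
Proof.
move=> lt_j; have lt_j' := ltnW lt_j.
apply/existsP; exists (Ordinal lt_j'); rewrite /= lt_j eqxx andbT.
by rewrite (set_nth_default x (nth x s j) lt_j') (set_nth_default x (nth x s j) lt_j) !eqxx.
Qed.

Lemma consecutive_index b u v : uniq s -> consecutive s S b u v ->
  [/\ u \in s, v \in s, index v s = (index u s).+1 & inS S (index u s) = b].
Proof.
move=> uniq_s /existsP[j /and4P[lt_j /eqP <- /eqP <- /eqP <-]]; have lt_j' := ltnW lt_j.
by rewrite !mem_nth // !index_uniq.
Qed.

Lemma consecutive_leq b u v (f : V -> nat) : inA s S f -> consecutive s S b u v ->
  f u <= f v /\ (b -> f u < f v).
Proof.
move=> A_f /existsP[j /and4P[lt_j /eqP nth_u /eqP nth_v /eqP <-]].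
have [le_f lt_f] := A_f j lt_j.
by rewrite !(nth_map u) ?nth_u ?nth_v // (ltnW lt_j) in le_f lt_f.
Qed.

End Consecutive.

Definition positive_proper (V : finType) (E : {set {set V}}) (f : V -> nat) : Prop :=
  (forall v, 0 < f v) /\ (forall e, e \in E -> nonconstant_on e f).

Definition pair_rel (V : finType) (W T : {set V * V}) : rel V :=
  fun x y => ((x, y) \in W) || ((y, x) \in T).

Section EdgeOrders.
Variables (V : finType) (E : {set {set V}}).
Hypothesis E_decomp : forall e, e \in E -> exists S : seq V -> {set 'I_(#|e|).-1}, edge_decomp S.

Definition edge_choice (e : {set V}) : seq V -> {set 'I_(#|e|).-1} :=
  epsilon (inhabits (fun _ => set0)) (fun S => edge_decomp S).

(* Meaningful only when f is positive and nonconstant on e; see edge_orderP. *)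
Definition edge_order (e : {set V}) (f : V -> nat) : seq V :=
  epsilon (inhabits [::]) (fun s => edge_bij e s /\ inA s (edge_choice e s) f).

Definition edge_step (e : {set V}) (f : V -> nat) (b : bool) : rel V :=
  consecutive (edge_order e f) (edge_choice e (edge_order e f)) b.

Definition step_pairs (f : V -> nat) (b : bool) : {set V * V} :=
  [set p | [exists e in E, edge_step e f b p.1 p.2]].

Definition edge_arc (e : {set V}) (f : V -> nat) : rel V :=
  fun u v => edge_step e f false u v || edge_step e f true v u.

Lemma edge_choiceP e : e \in E -> edge_decomp (edge_choice e).
Proof. by move=> eE; apply: epsilon_spec; apply: E_decomp. Qed.

Lemma edge_orderP e f : (forall v, 0 < f v) -> e \in E -> nonconstant_on e f ->
  edge_bij e (edge_order e f) /\ inA (edge_order e f) (edge_choice e (edge_order e f)) f.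
Proof.
move=> f_pos eE f_nc; apply: (epsilon_spec (inhabits [::]) (fun s => edge_bij e s /\ inA s _ f)).
by have [/(_ f (fun v _ => f_pos v)) [decomp _] _] := edge_choiceP eE; apply: decomp.
Qed.

Lemma edge_order_uniq e f : positive_proper E f -> e \in E ->
  uniq (edge_order e f) /\ edge_order e f =i e.
Proof.
move=> [f_pos f_nc] eE; have [/andP[uniq_s /forallP mem_s] _] := edge_orderP f_pos eE (f_nc e eE).
by split=> // v; apply/eqP.
Qed.

Lemma respects_step_pairs f : positive_proper E f ->
  respects (step_pairs f false) (step_pairs f true) f.
Proof.
move=> [f_pos f_nc]; apply/andP; split; apply/forallP => p; apply/implyP;
  rewrite inE => /existsP[e /andP[eE step_e]];
  have [_ A_f] := edge_orderP f_pos eE (f_nc e eE); have := consecutive_leq A_f step_e.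
  by case.
by case=> _ /(_ isT).
Qed.

Section Stability.
Variables (f g : V -> nat).
Hypotheses (f_pp : positive_proper E f) (g_pos : forall v, 0 < g v)
           (g_resp : respects (step_pairs f false) (step_pairs f true) g).

Lemma edge_order_stable e : e \in E -> nonconstant_on e g /\ edge_order e g = edge_order e f.
Proof.
move=> eE; case: f_pp => f_pos f_nc; set s := edge_order e f.
have [s_bij A_f] := edge_orderP f_pos eE (f_nc e eE).
have [/(_ g (fun v _ => g_pos v)) [_ g_nc] unique] := edge_choiceP eE.
have A_g : inA s (edge_choice e s) g.
  move=> j lt_j; have x : V by case: s lt_j => // x _ _; exact: x.
  have /andP[/forallP g_W /forallP g_T] := g_resp.
  have step_j := consecutive_nth (edge_choice e s) x lt_j.
  rewrite !(nth_map x) ?(ltnW lt_j) //.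
  have pair_j b : inS (edge_choice e s) j = b -> (nth x s j, nth x s j.+1) \in step_pairs f b.
    by move=> <-; rewrite inE; apply/existsP; exists e; rewrite eE.
  case: (boolP (inS (edge_choice e s) j)) => [in_j|/negbTE out_j].
    by have /(implyP (g_T _)) lt_g := pair_j true in_j; split=> //; apply: ltnW.
  have /(implyP (g_W _)) le_g := pair_j false out_j.
  by split=> // in_j; rewrite in_j in out_j.
have g_nce : nonconstant_on e g by apply: g_nc; exists s; split.
have [g_bij A_g'] := edge_orderP g_pos eE g_nce.
by split=> //; apply: unique (fun v _ => g_pos v) g_bij s_bij A_g' A_g.
Qed.

Lemma step_pairs_stable :
  [/\ positive_proper E g, step_pairs g false = step_pairs f false
    & step_pairs g true = step_pairs f true].
Proof.
split; first by split=> // e eE; case: (edge_order_stable eE).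
all: apply/setP => p; rewrite !inE; apply: eq_existsb => e.
all: by case: (boolP (e \in E)) => //= eE; rewrite /edge_step (proj2 (edge_order_stable eE)).
Qed.

End Stability.

Local Notation arc f := (pair_rel (step_pairs f false) (step_pairs f true)).

Lemma arc_edge f x y : arc f x y -> exists2 e, e \in E & edge_arc e f x y.
Proof.
rewrite /pair_rel !inE => /orP[]/existsP[e /andP[eE step_e]];
  by exists e => //; rewrite /edge_arc step_e ?orbT.
Qed.

Section EdgeArcs.
Variables (f : V -> nat) (e : {set V}).
Hypotheses (f_pp : positive_proper E f) (eE : e \in E).
Local Notation s := (edge_order e f).

Lemma edge_arc_index u v : edge_arc e f u v ->
  [/\ u \in s, v \in s & (index v s == (index u s).+1) || (index u s == (index v s).+1)].
Proof.
have [uniq_s _] := edge_order_uniq f_pp eE.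
by case/orP=> /(consecutive_index uniq_s)[-> -> -> _]; rewrite eqxx ?orbT.
Qed.

Lemma edge_arc_mem u v : edge_arc e f u v -> u \in e /\ v \in e.
Proof.
have [_ mem_s] := edge_order_uniq f_pp eE.
by case/edge_arc_index; rewrite !mem_s.
Qed.

Lemma edge_arc_asym u v : edge_arc e f u v -> ~~ edge_arc e f v u.
Proof.
have [uniq_s _] := edge_order_uniq f_pp eE.
case/orP=> /(consecutive_index uniq_s)[_ _ idx1 in1];
  apply/negP => /orP[]/(consecutive_index uniq_s)[_ _ idx2 in2];
  by [move: idx1 idx2; lia | rewrite in1 in in2].
Qed.

End EdgeArcs.

Lemma arc_path_edges f y p : path (arc f) y p ->
  exists es : seq {set V}, size es = size p /\ forall i x, i < size p ->
    nth set0 es i \in E /\ edge_arc (nth set0 es i) f (nth x (y :: p) i) (nth x p i).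
Proof.
elim: p y => [|z p IH] y /=; first by exists [::].
case/andP => /arc_edge[e eE arc_e] /IH[es [size_es arc_es]].
by exists (e :: es); split=> [|[|i] x //= lt_i]; [rewrite /= size_es | apply: arc_es].
Qed.

Lemma arc_cycle_closed_walk f y p es e0 : positive_proper E f ->
  uniq (y :: p) -> size es = size p ->
  (forall i x, i < size p ->
     nth set0 es i \in E /\ edge_arc (nth set0 es i) f (nth x (y :: p) i) (nth x p i)) ->
  e0 \in E -> edge_arc e0 f (last y p) y -> closed_walk E (y :: p) (rcons es e0).
Proof.
move=> f_pp uniq_p size_es arc_es e0E arc0.
have [last_e0 y_e0] := edge_arc_mem f_pp e0E arc0.
split=> //; first by rewrite size_rcons size_es.
  move=> e; rewrite mem_rcons inE => /orP[/eqP-> //|/(nthP set0)[i lt_i <-]].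
  by have [] := arc_es i y; rewrite -?size_es.
split.
- move=> i x lt_i; rewrite nth_rcons size_es.
  case: (ltngtP i (size p)) lt_i => [lt_ip _|/= gt_ip lt_ip|-> _].
  + by have [eE /(edge_arc_mem f_pp eE)[]] := arc_es i x lt_ip.
  + by move: gt_ip; rewrite ltnNge -ltnS lt_ip.
  + by rewrite -last_nth.
- move=> i x; rewrite ltnS => lt_i; rewrite nth_rcons size_es lt_i.
  by have [eE /(edge_arc_mem f_pp eE)[]] := arc_es i x lt_i.
- by move=> x; rewrite last_rcons.
Qed.

Lemma arc_acyclic f : hypertree E -> positive_proper E f ->
  forall x y, arc f x y -> ~~ connect (arc f) y x.
Proof.
move=> [_ _ no_cycle] f_pp x y xy; apply/negP => /connectP[p0 path_p0 x_last].
move: xy; rewrite x_last; case: (shortenP path_p0) => p path_p uniq_p _ {x_last path_p0 p0}.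
move=> /arc_edge[e0 e0E arc0].
have [es [size_es arc_es]] := arc_path_edges path_p.
have walk := arc_cycle_closed_walk f_pp uniq_p size_es arc_es e0E arc0.
have e0_es : e0 \in rcons es e0 by rewrite mem_rcons mem_head.
have /allP all_e0 := closed_walk_single_edge no_cycle walk e0_es.
have nonempty : ~~ nilp (y :: p) by [].
case/negP: (oriented_path_acyclic (edge_arc_index f_pp e0E) (edge_arc_asym f_pp e0E) nonempty).
rewrite /= rcons_path arc0 andbT; apply/(pathP y) => i lt_i.
have [_] := arc_es i y lt_i; suff -> : nth set0 es i = e0 by [].
by apply/eqP/all_e0; rewrite mem_rcons inE mem_nth ?orbT ?size_es.
Qed.

Definition realizable (WT : {set V * V} * {set V * V}) : Prop :=
  exists2 f, positive_proper E f & (step_pairs f false, step_pairs f true) = WT.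

Definition shift N (chi : {ffun V -> 'I_N}) : V -> nat := fun v => (chi v).+1.

Definition arc_class N (chi : {ffun V -> 'I_N}) : {set V * V} * {set V * V} :=
  (step_pairs (shift chi) false, step_pairs (shift chi) true).

Lemma proper_shift N (chi : {ffun V -> 'I_N}) : Defs.proper E chi <-> positive_proper E (shift chi).
Proof.
split=> [/forallP chi_pr|[_ chi_nc]].
  split=> // e eE; have /existsP[u /andP[ue /existsP[v /andP[ve neq_uv]]]] := implyP (chi_pr e) eE.
  by exists u, v; split=> //; move=> [] /val_inj /eqP; rewrite (negbTE neq_uv).
apply/forallP => e; apply/implyP => eE; have [u [v [ue ve neq_uv]]] := chi_nc e eE.
apply/existsP; exists u; rewrite ue; apply/existsP; exists v; rewrite ve.
by apply/eqP => eq_uv; apply: neq_uv; rewrite /shift eq_uv.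
Qed.

Lemma respects_shift (W T : {set V * V}) N (chi : {ffun V -> 'I_N}) :
  respects W T (shift chi) = respects W T (val \o chi).
Proof. by congr andb; apply: eq_forallb => p; rewrite ltnS. Qed.

Section Classes.
Variables (N : nat) (alpha : {ffun 'I_N -> nat}) (WT : {set V * V} * {set V * V}).
Local Notation class := [set chi : {ffun V -> 'I_N} |
  (Defs.proper E chi && has_content chi alpha) && (arc_class chi == WT)].

Lemma card_class_realizable : realizable WT ->
  #|class| =
  #|[set chi : {ffun V -> 'I_N} | respects WT.1 WT.2 (val \o chi) && has_content chi alpha]|.
Proof.
move=> [f f_pp <-]; apply: eq_card => chi; rewrite !inE.
apply/idP/idP => [/andP[/andP[/proper_shift chi_pp ->] /eqP <-]|/andP[resp ->]].
  by rewrite andbT -respects_shift; apply: respects_step_pairs.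
rewrite -respects_shift /= in resp.
have [chi_pp eq_W eq_T] := step_pairs_stable f_pp (fun v => ltn0Sn _) resp.
by rewrite /arc_class /shift eq_W eq_T eqxx !andbT; apply/proper_shift.
Qed.

Lemma card_class_unrealizable : ~ realizable WT -> #|class| = 0.
Proof.
move=> not_real; apply: eq_card0 => chi; rewrite !inE; apply/negP.
by case/andP => /andP[/proper_shift chi_pp _] /eqP class_chi; apply: not_real; exists (shift chi).
Qed.

End Classes.

End EdgeOrders.

Section ConnectRank.
Variables (V : finType) (R : rel V).

Definition connect_rank (v : V) : nat := #|[set u | connect R u v]| * #|V| + enum_rank v.

Lemma connect_rank_inj : injective connect_rank.
Proof.
move=> u v /(congr1 (modn^~ #|V|)); rewrite /connect_rank !modnMDl !modn_small //.
by move/val_inj/enum_rank_inj.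
Qed.

Lemma connect_rank_lt x y : R x y -> ~~ connect R y x -> connect_rank x < connect_rank y.
Proof.
move=> xy not_yx; rewrite /connect_rank.
have lt_card : #|[set u | connect R u x]| < #|[set u | connect R u y]|.
  apply: proper_card; apply/properP; split.
    by apply/subsetP => u; rewrite !inE => /connect_trans; apply; apply: connect1.
  by exists y; rewrite !inE ?connect0.
have : #|[set u | connect R u x]|.+1 * #|V| <= #|[set u | connect R u y]| * #|V|.
  by rewrite leq_mul2r lt_card orbT.
have lt_rank : (enum_rank x : nat) < #|V| := ltn_ord _.
by rewrite mulSn; lia.
Qed.

End ConnectRank.

Section Coefficients.
Variables (V : finType) (E : {set {set V}}).
Hypotheses (E_tree : hypertree E)
  (E_decomp : forall e, e \in E -> exists S : seq V -> {set 'I_(#|e|).-1}, edge_decomp S).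

(* Realizability quantifies over all colourings V -> nat, hence the classical test. *)
Definition class_coef (WT : {set V * V} * {set V * V}) (S : {set 'I_(#|V|).-1}) : nat :=
  if excluded_middle_informative (realizable E WT) then
    #|linear_extensions_des (connect_rank (pair_rel WT.1 WT.2)) WT.1 WT.2 S|
  else 0.

Lemma realizable_rank WT : realizable E WT ->
  let rk := connect_rank (pair_rel WT.1 WT.2) in
  (forall p, p \in WT.1 -> rk p.1 < rk p.2) /\ (forall p, p \in WT.2 -> rk p.2 < rk p.1).
Proof.
move=> [f f_pp <-] /=; have acyclic := arc_acyclic E_decomp E_tree f_pp.
by split=> -[a b] /= ab; apply: connect_rank_lt (acyclic _ _ _); rewrite /pair_rel ab ?orbT.
Qed.

Lemma card_class_F_coef N (alpha : {ffun 'I_N -> nat}) WT :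
  #|[set chi : {ffun V -> 'I_N} |
      (Defs.proper E chi && has_content chi alpha) && (arc_class E chi == WT)]| =
  \sum_(S : {set 'I_(#|V|).-1}) class_coef WT S * F_coef S alpha.
Proof.
rewrite /class_coef; case: excluded_middle_informative => [real|not_real]; last first.
  by rewrite card_class_unrealizable // big1 // => S _; rewrite mul0n.
have [rk_W rk_T] := realizable_rank real.
rewrite card_class_realizable //=.
by rewrite (card_respects_sum_F_coef (@connect_rank_inj _ _) alpha rk_W rk_T).
Qed.

Lemma XH_coef_sum_F_coef N (alpha : {ffun 'I_N -> nat}) :
  XH_coef E alpha =
  \sum_(S : {set 'I_(#|V|).-1}) (\sum_WT class_coef WT S) * F_coef S alpha.
Proof.
rewrite /XH_coef -sum1_card (partition_big (@arc_class _ E N) predT) //=.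
under [RHS]eq_bigr => S _ do rewrite big_distrl /=.
rewrite exchange_big /=; apply: eq_bigr => WT _.
by rewrite -card_class_F_coef -sum1_card; apply: eq_bigl => chi; rewrite !inE.
Qed.

End Coefficients.

Theorem theorem5p1 (V : finType) (E : {set {set V}}) :
  hypertree E ->
  (forall e, e \in E -> exists S : seq V -> {set 'I_(#|e|).-1}, edge_decomp S) ->
  F_positive E.
Proof.
move=> E_tree E_decomp.
exists (fun S => Posz (\sum_WT class_coef E WT S)); split=> // N alpha.
rewrite (XH_coef_sum_F_coef E_tree E_decomp) (big_morph Posz PoszD (erefl _)).
by apply: eq_bigr => S _; rewrite PoszM.
Qed.
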